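(* In the setting described in the context, assume $c>4.1\cdot 10^{-5}a_2b^3$ and $b>10^5$. If $z=w_n$ with $n\geq 4$, then $\log z>\frac{n}{2}\log(bc)$.
   Context: A $D(4)$-quadruple is a set of four distinct positive integers such that the product of any two distinct elements increased by $4$ is a perfect square. Setting: $a_1<a_2<b<c<d$ are positive integers such that $\{a_1,b,c,d\}$ and $\{a_2,b,c,d\}$ are $D(4)$-quadruples. Let $r_2,s_2,t,z$ be the positive integers with $a_2b+4=r_2^2$, $a_2c+4=s_2^2$, $bc+4=t^2$, $cd+4=z^2$. For integers $z_{(0)},x_{(0)},z_{(1)},y_{(1)}$ define the sequences $v_0=z_{(0)}$, $v_1=\frac12(s_2z_{(0)}+cx_{(0)})$, $v_{m+2}=s_2v_{m+1}-v_m$, and $w_0=z_{(1)}$, $w_1=\frac12(tz_{(1)}+cy_{(1)})$, $w_{n+2}=tw_{n+1}-w_n$. The value $z$ admits a representation $z=v_m=w_n$ with nonnegative integers $m,n$ where either (i) $m\equiv n\equiv 0\pmod 2$, $x_{(0)}=y_{(1)}=2$, $|z_{(0)}|=|z_{(1)}|=2$, $z_{(0)}z_{(1)}>0$; or (ii) $m\equiv n\equiv 1\pmod 2$, $x_{(0)}=y_{(1)}=r_2$, $|z_{(0)}|=t$, $|z_{(1)}|=s_2$, $z_{(0)}z_{(1)}>0$. Statements ''$z=w_n$'' or ''$z=v_m=w_n$'' refer to such a representation. *)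

From Stdlib Require Import Reals ZArith.
Open Scope R_scope.

Definition is_square (x : Z) : Prop := exists k : Z, x = (k * k)%Z.

Definition D4_quadruple (a b c d : Z) : Prop :=
  (0 < a)%Z /\ (0 < b)%Z /\ (0 < c)%Z /\ (0 < d)%Z /\
  a <> b /\ a <> c /\ a <> d /\ b <> c /\ b <> d /\ c <> d /\
  is_square (a * b + 4) /\ is_square (a * c + 4) /\ is_square (a * d + 4) /\
  is_square (b * c + 4) /\ is_square (b * d + 4) /\ is_square (c * d + 4).

(* Binary recurrence u_0 = p0, u_1 = p1, u_{k+2} = q u_{k+1} - u_k (over R,
   so the halving in the initial value v_1 needs no integrality convention). *)
Fixpoint lin_rec_aux (q p0 p1 : R) (k : nat) : R * R :=
  match k with
  | O => (p0, p1)
  | S k' => let (x, y) := lin_rec_aux q p0 p1 k' in (y, q * y - x)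
  end.

Definition lin_rec (q p0 p1 : R) (k : nat) : R := fst (lin_rec_aux q p0 p1 k).

Definition vseq (s2 c z0 x0 : Z) (m : nat) : R :=
  lin_rec (IZR s2) (IZR z0) ((IZR s2 * IZR z0 + IZR c * IZR x0) / 2) m.

Definition wseq (t c z1 y1 : Z) (n : nat) : R :=
  lin_rec (IZR t) (IZR z1) ((IZR t * IZR z1 + IZR c * IZR y1) / 2) n.

(* Put beta = sqrt(bc).  Since t^2 = bc + 4, the characteristic roots of the
   recurrence w_{k+2} = t w_{k+1} - w_k are t/2 +- sqrt(t^2/4 - 1), and the
   larger one exceeds beta.  Concretely, t*beta >= beta^2 + 1, and then every
   sequence of this recurrence with 0 < w_1 and beta*w_0 <= w_1 satisfies
   w_{k+1} >= beta*w_k, hence w_n >= beta^(n-1) w_1 (section [Growth]).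

   It remains to check that the four admissible initial values of (w_0, w_1)
   satisfy w_1 > beta and beta*w_0 <= w_1 (section [InitialValue]).  Three
   cases are immediate; the case w_0 = -s2, w_1 = (c r2 - t s2)/2 needs
   c r2 - t s2 > 2 beta, which after two squarings reduces to a polynomial
   inequality in a2, b, c that holds as soon as c > 4 a2 b^2 (lemma
   [quartic_gap]); this size condition follows from c > 4.1e-5 a2 b^3 and
   b > 10^5.  Then z = w_n > beta^n, i.e. ln z > (n/2) ln(bc); of the
   hypothesis n >= 4 only n >= 1 is used. *)

From Stdlib Require Import Reals ZArith Lra Lia Psatz.
Open Scope R_scope.

Lemma lin_rec_0 q p0 p1 : lin_rec q p0 p1 0 = p0.
Proof. reflexivity. Qed.

Lemma lin_rec_1 q p0 p1 : lin_rec q p0 p1 1 = p1.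
Proof. reflexivity. Qed.

Lemma lin_rec_SS q p0 p1 k :
  lin_rec q p0 p1 (S (S k)) = q * lin_rec q p0 p1 (S k) - lin_rec q p0 p1 k.
Proof.
  unfold lin_rec; simpl.
  destruct (lin_rec_aux q p0 p1 k); reflexivity.
Qed.

Section Growth.

Variables q p0 p1 beta : R.
Hypothesis beta_gt0 : 0 < beta.
Hypothesis q_large : beta * beta + 1 <= q * beta.
Hypothesis p1_ratio : beta * p0 <= p1.
Hypothesis p1_pos : 0 < p1.

Local Notation u := (lin_rec q p0 p1).

Lemma lin_rec_ratio k : beta * u k <= u (S k) /\ 0 < u (S k).
Proof.
  induction k as [|k [IHratio IHpos]].
  - rewrite lin_rec_0, lin_rec_1; lra.
  - rewrite lin_rec_SS.
    set (x := u k) in *; set (y := u (S k)) in *.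
    assert (Hq : (beta * beta + 1) * y <= q * beta * y)
      by (apply Rmult_le_compat_r; lra).
    assert (Hnext : beta * y <= q * y - x)
      by (apply Rmult_le_reg_l with beta; lra).
    split; nra.
Qed.

Lemma lin_rec_geometric k : beta ^ k * p1 <= u (S k).
Proof.
  induction k as [|k IH].
  - rewrite lin_rec_1; simpl; lra.
  - destruct (lin_rec_ratio (S k)) as [Hratio _].
    simpl; nra.
Qed.

Lemma lin_rec_exceeds_pow n : beta < p1 -> (1 <= n)%nat -> beta ^ n < u n.
Proof.
  intros Hp1 Hn.
  destruct n as [|k]; [lia|].
  pose proof (lin_rec_geometric k).
  assert (0 < beta ^ k) by (apply pow_lt; lra).
  simpl; nra.
Qed.

End Growth.

Section InitialValue.

(* A, B, C stand for a2, b, c; beta = sqrt(BC).  The only size assumption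
   used is that C is large compared with A B^2. *)
Variables A B C : R.
Hypothesis A_ge1 : 1 <= A.
Hypothesis B_ge100 : 100 <= B.
Hypothesis C_large : 4 * A * B * B < C.

Local Notation beta := (sqrt (B * C)).

Lemma C_ge_400B : 400 * B <= C.
Proof. assert (400 * B <= 4 * A * B * B) by nra. lra. Qed.

Lemma BC_ge1 : 1 <= B * C.
Proof. pose proof C_ge_400B; nra. Qed.

Lemma beta_sq : beta * beta = B * C.
Proof. apply sqrt_sqrt; pose proof BC_ge1; lra. Qed.

Lemma beta_pos : 0 < beta.
Proof. apply sqrt_lt_R0; pose proof BC_ge1; lra. Qed.

Lemma beta_ge2 : 2 <= beta.
Proof. pose proof beta_sq; pose proof beta_pos; pose proof C_ge_400B; nra. Qed.

Lemma C_dominates_beta : 20 * beta <= C.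
Proof. pose proof beta_sq; pose proof beta_pos; pose proof C_ge_400B; nra. Qed.

(* The polynomial core of the hard case: with L = C^2 - 2BC - AC - 4 one has
   L > 0 and L^2 > BC (BC + 4)(AC + 4); indeed L ~ C^2 while the right-hand
   side is about A B^2 C^3 < C^4 / 4. *)
Lemma quartic_gap :
  0 < C * C - 2 * B * C - A * C - 4 /\
  B * C * (B * C + 4) * (A * C + 4) < (C * C - 2 * B * C - A * C - 4) ^ 2.
Proof.
  pose proof C_ge_400B.
  assert (HAB : 100 * A <= A * B) by nra.
  assert (HABB : 10000 * A <= A * B * B) by nra.
  assert (HCA : 40000 * A <= C) by lra.
  assert (HL : 99 / 100 * (C * C) <= C * C - 2 * B * C - A * C - 4) by nra.
  assert (HBC4 : B * C + 4 <= 1001 / 1000 * (B * C)) by nra.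
  assert (HAC4 : A * C + 4 <= 1001 / 1000 * (A * C)) by nra.
  split; [nra|].
  assert (HP : B * C * (B * C + 4) * (A * C + 4)
               <= (1001 / 1000) ^ 2 * ((A * B * B * C) * (C * C))).
  { replace ((1001 / 1000) ^ 2 * ((A * B * B * C) * (C * C)))
      with (B * C * (1001 / 1000 * (B * C)) * (1001 / 1000 * (A * C))) by ring.
    apply Rmult_le_compat; nra. }
  assert (HABC : (A * B * B * C) * (C * C) <= (C * C) * (C * C) / 4) by nra.
  assert (HL2 : (99 / 100 * (C * C)) ^ 2 <= (C * C - 2 * B * C - A * C - 4) ^ 2)
    by (apply pow_incr; nra).
  nra.
Qed.

Variables R2 S2 T : R.
Hypothesis R2_pos : 0 < R2.
Hypothesis S2_pos : 0 < S2.
Hypothesis T_pos : 0 < T.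
Hypothesis R2_sq : R2 * R2 = A * B + 4.
Hypothesis S2_sq : S2 * S2 = A * C + 4.
Hypothesis T_sq : T * T = B * C + 4.

Lemma T_near_beta : beta <= T <= beta + 1.
Proof using A_ge1 B_ge100 C_large T_pos T_sq.
  pose proof beta_sq; pose proof beta_ge2; split; nra.
Qed.

Lemma T_dominates : beta * beta + 1 <= T * beta.
Proof using A_ge1 B_ge100 C_large T_pos T_sq.
  pose proof beta_sq; pose proof beta_pos; pose proof BC_ge1.
  apply Rsqr_incr_0_var; [unfold Rsqr | nra].
  replace (T * beta * (T * beta)) with ((T * T) * (beta * beta)) by ring.
  rewrite T_sq, beta_sq; nra.
Qed.

Lemma CR2_ge : beta * S2 <= C * R2.
Proof using A_ge1 B_ge100 C_large R2_pos R2_sq S2_pos S2_sq.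
  pose proof beta_sq; pose proof beta_pos; pose proof C_ge_400B.
  apply Rsqr_incr_0_var; [unfold Rsqr | nra].
  replace (beta * S2 * (beta * S2)) with ((beta * beta) * (S2 * S2)) by ring.
  replace (C * R2 * (C * R2)) with ((C * C) * (R2 * R2)) by ring.
  rewrite beta_sq, S2_sq, R2_sq; nra.
Qed.

(* First squaring: beta t s2 < L, from [quartic_gap]. *)
Lemma beta_TS2_lt : beta * (T * S2) < C * C - 2 * B * C - A * C - 4.
Proof using A_ge1 B_ge100 C_large S2_pos S2_sq T_pos T_sq.
  destruct quartic_gap as [HL HP].
  assert (0 <= beta * (T * S2))
    by (pose proof beta_pos; apply Rmult_le_pos; [lra | apply Rmult_le_pos; lra]).
  apply Rsqr_incrst_0; [unfold Rsqr | lra | lra].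
  replace (beta * (T * S2) * (beta * (T * S2)))
    with ((beta * beta) * (T * T) * (S2 * S2)) by ring.
  rewrite beta_sq, T_sq, S2_sq; nra.
Qed.

(* Second squaring: (c r2)^2 - (t s2)^2 = 4L + 4bc exceeds 4 beta t s2 + 4 beta^2. *)
Lemma CR2_minus_TS2 : 2 * beta < C * R2 - T * S2.
Proof.
  pose proof beta_TS2_lt; pose proof beta_sq; pose proof beta_pos.
  assert (Hdiff : (C * R2) * (C * R2) - (T * S2) * (T * S2)
                  = 4 * (C * C - 2 * B * C - A * C - 4) + 4 * (B * C)).
  { replace ((C * R2) * (C * R2)) with ((C * C) * (R2 * R2)) by ring.
    replace ((T * S2) * (T * S2)) with ((T * T) * (S2 * S2)) by ring.
    rewrite R2_sq, T_sq, S2_sq; ring. }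
  assert (HX : T * S2 + 2 * beta < C * R2).
  { assert (0 < C * R2) by (pose proof C_ge_400B; nra).
    apply Rsqr_incrst_0; [unfold Rsqr | nra | lra]. nra. }
  lra.
Qed.

Lemma w_start w0 Y :
  ((w0 = 2 \/ w0 = -2) /\ Y = 2) \/ ((w0 = S2 \/ w0 = -S2) /\ Y = R2) ->
  beta < (T * w0 + C * Y) / 2 /\ beta * w0 <= (T * w0 + C * Y) / 2.
Proof.
  pose proof beta_ge2; pose proof T_near_beta; pose proof C_dominates_beta.
  intros [[[-> | ->] ->] | [[-> | ->] ->]].
  - lra.
  - lra.
  - assert (1 < S2) by (pose proof C_ge_400B; nra).
    pose proof CR2_ge.
    assert (beta * S2 <= T * S2) by nra.
    split; nra.
  - pose proof CR2_minus_TS2.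
    assert (0 <= beta * S2) by nra.
    split; nra.
Qed.

End InitialValue.

Lemma ln_gt_of_pow_sqrt x y n :
  0 < x -> sqrt x ^ n < y -> INR n / 2 * ln x < ln y.
Proof.
  intros Hx Hy.
  assert (Hs : 0 < sqrt x) by (apply sqrt_lt_R0; lra).
  assert (Hln : ln x = 2 * ln (sqrt x)).
  { rewrite <- (sqrt_sqrt x) at 1 by lra. rewrite ln_mult by lra. ring. }
  replace (INR n / 2 * ln x) with (ln (sqrt x ^ n)) by (rewrite ln_pow, Hln by lra; field).
  apply ln_increasing; [apply pow_lt|]; lra.
Qed.

Lemma initial_pair_real (z1 y1 r2 s2 : Z) :
  (Z.abs z1 = 2 /\ y1 = 2 \/ Z.abs z1 = s2 /\ y1 = r2)%Z ->
  ((IZR z1 = 2 \/ IZR z1 = -2) /\ IZR y1 = 2) \/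
  ((IZR z1 = IZR s2 \/ IZR z1 = - IZR s2) /\ IZR y1 = IZR r2).
Proof.
  intros [[Hz1 ->] | [Hz1 ->]]; [left | right]; split; try reflexivity.
  - assert (Hz : (z1 = 2 \/ z1 = -2)%Z) by lia.
    destruct Hz as [-> | ->]; [left | right]; reflexivity.
  - assert (Hz : (z1 = s2 \/ z1 = - s2)%Z) by lia.
    destruct Hz as [-> | ->]; [left | right; apply opp_IZR]; reflexivity.
Qed.

Lemma size_hypotheses A B C :
  1 <= A -> 10 ^ 5 < B -> 41 / 1000000 * A * B ^ 3 < C ->
  100 <= B /\ 4 * A * B * B < C.
Proof.
  intros HA HB HC; simpl in HB, HC.
  split; [lra|].
  assert (HABB : 0 <= A * B * B) by (repeat apply Rmult_le_pos; lra).
  assert (4 * (A * B * B) <= 41 / 1000000 * B * (A * B * B))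
    by (apply Rmult_le_compat_r; lra).
  nra.
Qed.

Theorem mainTheorem8 :
  forall (a1 a2 b c d r2 s2 t z : Z),
    (0 < a1)%Z -> (a1 < a2)%Z -> (a2 < b)%Z -> (b < c)%Z -> (c < d)%Z ->
    D4_quadruple a1 b c d -> D4_quadruple a2 b c d ->
    (0 < r2)%Z -> (0 < s2)%Z -> (0 < t)%Z -> (0 < z)%Z ->
    (a2 * b + 4 = r2 * r2)%Z -> (a2 * c + 4 = s2 * s2)%Z ->
    (b * c + 4 = t * t)%Z -> (c * d + 4 = z * z)%Z ->
    forall (z0 x0 z1 y1 : Z) (m n : nat),
      ((Nat.even m = true /\ Nat.even n = true /\
        x0 = 2%Z /\ y1 = 2%Z /\ Z.abs z0 = 2%Z /\ Z.abs z1 = 2%Z /\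
        (z0 * z1 > 0)%Z)
       \/
       (Nat.odd m = true /\ Nat.odd n = true /\
        x0 = r2 /\ y1 = r2 /\ Z.abs z0 = t /\ Z.abs z1 = s2 /\
        (z0 * z1 > 0)%Z)) ->
      IZR z = vseq s2 c z0 x0 m ->
      IZR z = wseq t c z1 y1 n ->
      IZR c > (41 / 1000000) * IZR a2 * IZR b ^ 3 ->
      IZR b > 10 ^ 5 ->
      (4 <= n)%nat ->
      ln (IZR z) > INR n / 2 * ln (IZR b * IZR c).
Proof.
  intros a1 a2 b c d r2 s2 t z Ha1 H12 _ _ _ _ _ Hr2 Hs2 Ht _
    Er Es Et _ z0 x0 z1 y1 m n Hcase _ Hw Hc Hb Hn.
  assert (HA : 1 <= IZR a2) by (apply IZR_le; lia).
  destruct (size_hypotheses _ _ _ HA Hb Hc) as [HB HC].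
  apply (f_equal IZR), eq_sym in Er, Es, Et; rewrite plus_IZR, !mult_IZR in Er, Es, Et.
  apply IZR_lt in Hr2, Hs2, Ht.
  assert (Hstart : (Z.abs z1 = 2 /\ y1 = 2 \/ Z.abs z1 = s2 /\ y1 = r2)%Z)
    by (destruct Hcase as [(_ & _ & _ & ? & _ & ? & _) | (_ & _ & _ & ? & _ & ? & _)];
        [left | right]; split; assumption).
  apply initial_pair_real in Hstart.
  destruct (w_start _ _ _ HA HB HC _ _ _ Hr2 Hs2 Ht Er Es Et _ _ Hstart)
    as [Hp1 Hratio].
  pose proof (beta_pos _ _ _ HA HB HC) as Hbeta.
  pose proof (T_dominates _ _ _ HA HB HC _ Ht Et) as Hq.
  assert (Hpow : sqrt (IZR b * IZR c) ^ n < IZR z).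
  { rewrite Hw; unfold wseq.
    apply lin_rec_exceeds_pow; [lra | lra | lra | lra | lra | lia]. }
  pose proof (BC_ge1 _ _ _ HA HB HC) as HBC.
  apply Rlt_gt, ln_gt_of_pow_sqrt; [lra | exact Hpow].
Qed.
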